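(* Let $\{f_i\}_{i\in I}$ be a frame for a Hilbert space $\mathbb H$ with frame operator $S$ and canonical dual frame $\{\tilde f_i\}_{i\in I}$, $\tilde f_i=S^{-1}f_i$. Then for every subset $J\subset I$ and every $f\in\mathbb H$, $$\sum_{i\in J}|\langle f,f_i\rangle|^2-\sum_{i\in I}|\langle S_Jf,\tilde f_i\rangle|^2=\sum_{i\in J^c}|\langle f,f_i\rangle|^2-\sum_{i\in I}|\langle S_{J^c}f,\tilde f_i\rangle|^2,$$ where $J^c=I\setminus J$.
   Context: A family $\{f_i\}_{i\in I}$ in a Hilbert space $\mathbb H$ is a frame if there are constants $0<A\le B<\infty$ with $A\|f\|^2\le\sum_{i\in I}|\langle f,f_i\rangle|^2\le B\|f\|^2$ for all $f\in\mathbb H$; it is a Bessel sequence if only the upper inequality holds. Its frame operator is $Sf=\sum_{i\in I}\langle f,f_i\rangle f_i$ (bounded, positive, invertible for a frame). For $J\subset I$, $S_Jf=\sum_{i\in J}\langle f,f_i\rangle f_i$. *)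

From HB Require Import structures.
From mathcomp Require Import all_boot all_order all_algebra.
From mathcomp Require Import all_classical all_reals all_analysis.
From mathcomp Require Import complex.
Set Implicit Arguments. Unset Strict Implicit. Unset Printing Implicit Defensive.
Import Order.TTheory GRing.Theory Num.Theory.
Local Open Scope classical_set_scope.
Local Open Scope ring_scope.

Notation cnorm := Normc.normc.
Notation cRe := complex.Re.

Section Frames.
Variable R : realType.
Variable V : lmodType R[i].
Variable ip : V -> V -> R[i].

Definition hnorm (u : V) : R := Num.sqrt (cRe (ip u u)).

Definition is_hilbert : Prop :=
  [/\ (forall (a : R[i]) (u v w : V), ip (a *: u + v) w = a * ip u w + ip v w),
      (forall u v : V, ip v u = conjc (ip u v)),
      (forall u : V, 0 <= ip u u),
      (forall u : V, ip u u = 0 -> u = 0) &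
      (forall s : nat -> V,
          (forall e : R, 0 < e -> exists N : nat, forall m n : nat,
               (N <= m)%N -> (N <= n)%N -> hnorm (s m - s n) < e) ->
          exists l : V, forall e : R, 0 < e -> exists N : nat, forall n : nat,
               (N <= n)%N -> hnorm (s n - l) < e)].

Variable I : choiceType.

(* unconditional convergence in V of sum_{i in J} F i to v
   (convergence of the net of finite partial sums) *)
Definition has_sum (F : I -> V) (J : set I) (v : V) : Prop :=
  forall e : R, 0 < e -> exists A0 : set I,
    [/\ finite_set A0, A0 `<=` J &
        forall A : set I, finite_set A -> A0 `<=` A -> A `<=` J ->
          hnorm (v - \sum_(i \in A) F i) < e].

Definition sq_coef_sum (f : I -> V) (J : set I) (g : V) : \bar R :=
  (\esum_(i in J) ((cnorm (ip g (f i))) ^+ 2)%:E)%E.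

Definition is_frame (f : I -> V) : Prop :=
  exists A B : R, [/\ 0 < A, A <= B &
    forall g : V, ((A * hnorm g ^+ 2)%:E <= sq_coef_sum f setT g)%E /\
                  (sq_coef_sum f setT g <= (B * hnorm g ^+ 2)%:E)%E].

(* S_J g = sum_{i in J} <g, f i> f i  (the value of the unconditionally
   convergent series, selected by choice) *)
Definition frame_op_on (f : I -> V) (J : set I) (g : V) : V :=
  xget 0 [set v | has_sum (fun i => ip g (f i) *: f i) J v].

Definition frame_op (f : I -> V) : V -> V := frame_op_on f setT.

(* inverse of an operator T (meaningful when T is bijective) *)
Definition op_inv (T : V -> V) (g : V) : V := xget 0 [set h | T h = g].

Definition canonical_dual (f : I -> V) (i : I) : V :=
  op_inv (frame_op f) (f i).

End Frames.

From HB Require Import structures.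
From mathcomp Require Import all_boot all_order all_algebra.
From mathcomp Require Import all_classical all_reals all_analysis.
From mathcomp Require Import complex.
From mathcomp Require Import ring lra.
Import Order.TTheory GRing.Theory Num.Theory.
Local Open Scope classical_set_scope.
Local Open Scope ring_scope.
Set Implicit Arguments. Unset Strict Implicit. Unset Printing Implicit Defensive.

(* Write T = S^-1, which is self-adjoint since S is.  Then
     sum_i |<h, T f_i>|^2 = sum_i |<T h, f_i>|^2 = Re <S T h, T h> = Re <h, T h>
   and sum_(i in J) |<g, f_i>|^2 = Re <S_J g, g>.  Substituting
   g = T S_J g + T S_(J^c) g, the left-hand side of the identity becomes
   Re <S_J g, T S_(J^c) g> and the right-hand side Re <S_(J^c) g, T S_J g>,
   which agree because T is self-adjoint.
   Most of the work justifies the objects involved: the series S_J g converge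
   unconditionally because their partial sums form a Cauchy net (the Bessel
   bound applied to tails of the convergent sum of |<g, f_i>|^2), and S is
   invertible because B^-1 S is within sqrt (1 - A/B) < 1 of the identity, so
   the iteration x_(n+1) = x_n + (y - B^-1 S x_n) converges. *)

Notation cIm := complex.Im.

Section ComplexParts.
Variable R : realType.
Implicit Types z w : R[i].

Lemma ReD z w : cRe (z + w) = cRe z + cRe w. Proof. by case: z; case: w. Qed.
Lemma ImD z w : cIm (z + w) = cIm z + cIm w. Proof. by case: z; case: w. Qed.
Lemma ReN z : cRe (- z) = - cRe z. Proof. by case: z. Qed.
Lemma ImN z : cIm (- z) = - cIm z. Proof. by case: z. Qed.
Lemma ReB z w : cRe (z - w) = cRe z - cRe w. Proof. by rewrite ReD ReN. Qed.
Lemma ImB z w : cIm (z - w) = cIm z - cIm w. Proof. by rewrite ImD ImN. Qed.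
Lemma ReM z w : cRe (z * w) = cRe z * cRe w - cIm z * cIm w.
Proof. by case: z; case: w. Qed.
Lemma ImM z w : cIm (z * w) = cRe z * cIm w + cIm z * cRe w.
Proof. by case: z => a b; case: w => c d /=; rewrite addrC. Qed.
Lemma ReJ z : cRe (conjc z) = cRe z. Proof. by case: z. Qed.
Lemma ImJ z : cIm (conjc z) = - cIm z. Proof. by case: z. Qed.
Lemma Re0 : cRe (0 : R[i]) = 0. Proof. by []. Qed.
Lemma Im0 : cIm (0 : R[i]) = 0. Proof. by []. Qed.
Lemma ReR (a : R) : cRe (a%:C)%C = a. Proof. by []. Qed.
Lemma ImR (a : R) : cIm (a%:C)%C = 0. Proof. by []. Qed.
Lemma Rei : cRe ('i%C : R[i]) = 0. Proof. by []. Qed.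
Lemma Imi : cIm ('i%C : R[i]) = 1. Proof. by []. Qed.

Definition ReImE :=
  (ReD, ImD, ReN, ImN, ReM, ImM, ReJ, ImJ, Re0, Im0, ReR, ImR, Rei, Imi).

Lemma complex_ReIm_eq z w : cRe z = cRe w -> cIm z = cIm w -> z = w.
Proof. by case: z; case: w => /= a b c d -> ->. Qed.

Lemma normc_sqr z : cnorm z ^+ 2 = cRe z ^+ 2 + cIm z ^+ 2.
Proof. by case: z => a b; rewrite /= sqr_sqrtr // addr_ge0 // sqr_ge0. Qed.

Lemma normc_ge0 z : 0 <= cnorm z.
Proof. by case: z => a b; exact: sqrtr_ge0. Qed.

Lemma ge0_complex z : 0 <= z -> cIm z = 0 /\ 0 <= cRe z.
Proof. by case: z => a b; rewrite lecE /= => /andP[/eqP -> ->]. Qed.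

Lemma mulcJ_ReIm z : cRe (z * conjc z) = cnorm z ^+ 2 /\ cIm (z * conjc z) = 0.
Proof. by rewrite normc_sqr; case: z => a b /=; split; ring. Qed.

(* [0 <= |t z - w|^2], expanded *)
Lemma Re_mulcJ_le z w t :
  2 * t * cRe (z * conjc w) <= t ^+ 2 * cnorm z ^+ 2 + cnorm w ^+ 2.
Proof.
rewrite !normc_sqr; case: z => a1 a2; case: w => b1 b2 /=.
have := addr_ge0 (sqr_ge0 (t * a1 - b1)) (sqr_ge0 (t * a2 - b2)); nra.
Qed.

End ComplexParts.

Section FiniteSums.
Variable I : choiceType.
Implicit Types A B : set I.

Lemma fsbig_setD (M : nmodType) (F : I -> M) A B :
  finite_set B -> A `<=` B ->
  \sum_(i \in B) F i = \sum_(i \in A) F i + \sum_(i \in B `\` A) F i.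
Proof. by move=> fB AB; rewrite (fsbigID A) // setIidr // setDE. Qed.

Lemma fsumr_setD (M : zmodType) (F : I -> M) A B :
  finite_set B -> A `<=` B ->
  \sum_(i \in B) F i - \sum_(i \in A) F i = \sum_(i \in B `\` A) F i.
Proof. by move=> fB AB; rewrite (fsbig_setD F fB AB) addrC addKr. Qed.

Lemma ler_fsum_subset (R : realType) (F : I -> R) A B :
  finite_set B -> A `<=` B -> (forall i, B i -> 0 <= F i) ->
  \sum_(i \in A) F i <= \sum_(i \in B) F i.
Proof.
move=> fB AB F0; rewrite (fsbig_setD F fB AB) lerDl.
by apply: fsumr_ge0 => i [Bi _]; exact: F0.
Qed.

Lemma ler_fsum (R : realType) (F G : I -> R) A : finite_set A ->
  (forall i, A i -> F i <= G i) -> \sum_(i \in A) F i <= \sum_(i \in A) G i.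
Proof.
by move=> fA FG; rewrite -lee_fin -!fsumEFin //; apply: lee_fsum => // i /FG.
Qed.

Lemma fsbig_additive (M N : nmodType) (h : M -> N) (F : I -> M) A :
  finite_set A -> h 0 = 0 -> {morph h : x y / x + y} ->
  h (\sum_(i \in A) F i) = \sum_(i \in A) h (F i).
Proof.
move=> fA h0 hD; rewrite !fsbig_finite //.
elim: (finmap.enum_fset _) => [|x r IH]; first by rewrite !big_nil.
by rewrite !big_cons hD IH.
Qed.

Lemma scaler_fsumr (K : pzRingType) (M : lmodType K) (F : I -> M) A a :
  finite_set A -> a *: \sum_(i \in A) F i = \sum_(i \in A) a *: F i.
Proof. by move=> fA; rewrite !fsbig_finite // scaler_sumr. Qed.

Lemma Re_fsum (R : realType) (F : I -> R[i]) A : finite_set A ->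
  cRe (\sum_(i \in A) F i) = \sum_(i \in A) cRe (F i).
Proof. by move=> fA; apply: fsbig_additive => //; exact: ReD. Qed.

Lemma Im_fsum (R : realType) (F : I -> R[i]) A : finite_set A ->
  cIm (\sum_(i \in A) F i) = \sum_(i \in A) cIm (F i).
Proof. by move=> fA; apply: fsbig_additive => //; exact: ImD. Qed.

Lemma esum_net_cvg (R : realType) J (a : I -> R) s :
  (forall i, J i -> 0 <= a i) ->
  (forall e, 0 < e -> exists A0, [/\ finite_set A0, A0 `<=` J &
    forall A, finite_set A -> A0 `<=` A -> A `<=` J ->
      `|s - \sum_(i \in A) a i| <= e]) ->
  (\esum_(i in J) (a i)%:E)%E = s%:E.
Proof.
move=> a0 net.
have esum_le : (\esum_(i in J) (a i)%:E <= s%:E)%E.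
  apply: ge_ereal_sup => _ [X [fX XJ] <-]; rewrite fsumEFin // lee_fin.
  apply/ler_addgt0Pr => e e0; have [A0 [fA0 A0J netA0]] := net e e0.
  have fXA0 : finite_set (X `|` A0) by rewrite finite_setU.
  have XA0J : X `|` A0 `<=` J by move=> i [/XJ|/A0J].
  have := netA0 _ fXA0 (@subsetUr _ _ _) XA0J.
  have := ler_fsum_subset fXA0 (@subsetUl _ X A0) (fun i Xi => a0 i (XA0J i Xi)).
  by rewrite ler_norml => ? /andP[? ?]; lra.
have esum_fin : \esum_(i in J) (a i)%:E \is a fin_num.
  rewrite ge0_fin_numE ?(le_lt_trans esum_le) ?ltry //.
  by apply: esum_ge0 => i /a0; rewrite lee_fin.
rewrite -(fineK esum_fin) in esum_le *; rewrite lee_fin in esum_le.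
congr (_%:E); apply/eqP; rewrite eq_le esum_le /=.
apply/ler_addgt0Pr => e e0; have [A0 [fA0 A0J netA0]] := net e e0.
have : ((\sum_(i \in A0) a i)%:E <= \esum_(i in J) (a i)%:E)%E.
  by apply: esum_ge; exists A0 => //; rewrite fsumEFin.
have := netA0 _ fA0 (@subset_refl _ _) A0J.
by rewrite -(fineK esum_fin) lee_fin ler_norml => /andP[? ?] ?; lra.
Qed.

Lemma nondecreasing_finite_cover (G : nat -> set I) J :
  (forall n, finite_set (G n) /\ G n `<=` J) ->
  exists C : nat -> set I, [/\ forall n, finite_set (C n) /\ C n `<=` J,
    forall n, G n `<=` C n & forall n m, (n <= m)%N -> C n `<=` C m].
Proof.
move=> GJ; pose fix C n := if n is m.+1 then C m `|` G m.+1 else G 0%N.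
exists C; split.
- elim=> [|n [fC CJ]] //=; case: (GJ n.+1) => fG GnJ.
  by split; [rewrite finite_setU|move=> i [/CJ|/GnJ]].
- by case=> [|n] //=; exact: subsetUr.
- move=> n m; elim: m => [|m IH]; first by rewrite leqn0 => /eqP ->.
  rewrite leq_eqVlt => /orP[/eqP -> //|/IH nm].
  by apply: subset_trans nm _; exact: subsetUl.
Qed.

End FiniteSums.

Lemma geometric_eventually_lt (R : realType) (q c e : R) :
  0 <= q -> q < 1 -> 0 < e -> exists N, forall n, (N <= n)%N -> c * q ^+ n < e.
Proof.
move=> q0 q1 e0; have c1 : 0 < `|c| + 1 by rewrite ltr_wpDl.
have /cvgr0Pnorm_lt/(_ (e / (`|c| + 1))) : q ^+ n @[n --> \oo] --> 0.
  by apply: cvg_expr; rewrite ger0_norm.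
case; first by rewrite divr_gt0.
move=> N _ qN; exists N => n /qN; rewrite ger0_norm ?exprn_ge0 // ltr_pdivlMr //.
have := ler_norm c; have := exprn_ge0 n q0; nra.
Qed.

Section InnerProduct.
Variables (R : realType) (V : lmodType R[i]) (ip : V -> V -> R[i]).
Hypothesis ip_linear : forall a u v w, ip (a *: u + v) w = a * ip u w + ip v w.
Hypothesis ipC : forall u v, ip v u = conjc (ip u v).
Hypothesis ipxx_ge0 : forall u, 0 <= ip u u.
Hypothesis ipxx_eq0 : forall u, ip u u = 0 -> u = 0.

Lemma ipD u v w : ip (u + v) w = ip u w + ip v w.
Proof. by have := ip_linear 1 u v w; rewrite scale1r mul1r. Qed.

Lemma ip0 w : ip 0 w = 0.
Proof. by apply: (addrI (ip 0 w)); rewrite -ipD !addr0. Qed.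

Lemma ipZ a u w : ip (a *: u) w = a * ip u w.
Proof. by rewrite -[a *: u]addr0 ip_linear ip0 addr0. Qed.

Lemma ipN u w : ip (- u) w = - ip u w.
Proof. by rewrite -scaleN1r ipZ mulN1r. Qed.

Lemma ipB u v w : ip (u - v) w = ip u w - ip v w.
Proof. by rewrite ipD ipN. Qed.

Lemma Re_ipC u v : cRe (ip v u) = cRe (ip u v). Proof. by rewrite ipC ReJ. Qed.
Lemma Im_ipC u v : cIm (ip v u) = - cIm (ip u v). Proof. by rewrite ipC ImJ. Qed.

Lemma ipDr u v w : ip w (u + v) = ip w u + ip w v.
Proof. by rewrite [LHS]ipC ipD rmorphD (ipC u w) (ipC v w). Qed.

Lemma ipZr a u w : ip w (a *: u) = conjc a * ip w u.
Proof. by rewrite [LHS]ipC ipZ rmorphM (ipC u w). Qed.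

Lemma ip0r w : ip w 0 = 0.
Proof. by rewrite ipC ip0 rmorph0. Qed.

Lemma ipNr u w : ip w (- u) = - ip w u.
Proof. by rewrite [LHS]ipC ipN rmorphN (ipC u w). Qed.

Lemma ip_fsum (I : choiceType) (F : I -> V) (A : set I) w : finite_set A ->
  ip (\sum_(i \in A) F i) w = \sum_(i \in A) ip (F i) w.
Proof. by move=> fA; apply: (fsbig_additive (h := ip^~ w) _ fA (ip0 w)) => x y; exact: ipD. Qed.

Definition hnorm2 u := cRe (ip u u).

Lemma Im_ipxx u : cIm (ip u u) = 0. Proof. by case: (ge0_complex (ipxx_ge0 u)). Qed.
Lemma hnorm2_ge0 u : 0 <= hnorm2 u. Proof. by case: (ge0_complex (ipxx_ge0 u)). Qed.

Lemma hnorm2_eq0 u : hnorm2 u = 0 -> u = 0.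
Proof. by move=> u0; apply/ipxx_eq0/complex_ReIm_eq; rewrite ?Im_ipxx. Qed.

Lemma hnorm2D u v : hnorm2 (u + v) = hnorm2 u + 2 * cRe (ip u v) + hnorm2 v.
Proof. rewrite /hnorm2 ipD !ipDr !ReD (Re_ipC u v); lra. Qed.

Lemma hnorm2N u : hnorm2 (- u) = hnorm2 u.
Proof. by rewrite /hnorm2 ipN ipNr opprK. Qed.

Lemma hnorm2B u v : hnorm2 (u - v) = hnorm2 u - 2 * cRe (ip u v) + hnorm2 v.
Proof. rewrite hnorm2D hnorm2N ipNr ReN; lra. Qed.

Lemma hnorm2Z a u : hnorm2 (a *: u) = cnorm a ^+ 2 * hnorm2 u.
Proof. by rewrite /hnorm2 ipZ ipZr normc_sqr !ReImE Im_ipxx; case: a => x y /=; ring. Qed.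

Lemma hnorm_sqr u : hnorm ip u ^+ 2 = hnorm2 u.
Proof. by rewrite sqr_sqrtr // hnorm2_ge0. Qed.

Lemma hnorm_ge0 u : 0 <= hnorm ip u. Proof. exact: sqrtr_ge0. Qed.

Lemma hnorm_eq0 u : hnorm ip u = 0 -> u = 0.
Proof. by move=> u0; apply: hnorm2_eq0; rewrite -hnorm_sqr u0 expr0n. Qed.

Lemma hnorm0 : hnorm ip 0 = 0. Proof. by rewrite /hnorm ip0 sqrtr0. Qed.

Lemma hnormZ a u : hnorm ip (a *: u) = cnorm a * hnorm ip u.
Proof.
by rewrite /hnorm -/(hnorm2 _) hnorm2Z sqrtrM ?sqr_ge0 // sqrtr_sqr ger0_norm ?normc_ge0.
Qed.

Lemma hnormN u : hnorm ip (- u) = hnorm ip u.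
Proof. by rewrite /hnorm -/(hnorm2 _) hnorm2N. Qed.

Lemma hnormBC u v : hnorm ip (u - v) = hnorm ip (v - u).
Proof. by rewrite -hnormN opprB. Qed.

Lemma hnorm_lt u e : 0 < e -> hnorm2 u < e ^+ 2 -> hnorm ip u < e.
Proof. by move=> e0; rewrite -hnorm_sqr ltr_pXn2r ?nnegrE ?hnorm_ge0 ?ltW. Qed.

Lemma Re_ip_le u v : cRe (ip u v) <= hnorm ip u * hnorm ip v.
Proof.
have [/eqP|ab0] := eqVneq (hnorm ip u * hnorm ip v) 0.
  rewrite mulf_eq0 => /orP[] /eqP/hnorm_eq0 ->;
  by rewrite ?ip0 ?ip0r mulr_ge0 ?hnorm_ge0.
set a := hnorm ip u in ab0 *; set b := hnorm ip v in ab0 *.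
have ab_gt0 : 0 < a * b by rewrite lt_def ab0 mulr_ge0 ?hnorm_ge0.
have := hnorm2_ge0 ((b%:C)%C *: u - (a%:C)%C *: v).
rewrite hnorm2B !hnorm2Z ipZ ipZr -!hnorm_sqr -/a -/b !normc_sqr !ReImE.
rewrite !mul0r !subr0 !expr0n !addr0 => h.
have : (a * b) * cRe (ip u v) <= (a * b) * (a * b) by nra.
by rewrite ler_pM2l.
Qed.

Lemma unit_Re_ip_le (c : R[i]) u v :
  cnorm c = 1 -> cRe (c * ip u v) <= hnorm ip u * hnorm ip v.
Proof. by move=> c1; rewrite -ipZ -[hnorm ip u]mul1r -c1 -hnormZ Re_ip_le. Qed.

Lemma ReIm_ip_le u v :
  `|cRe (ip u v)| <= hnorm ip u * hnorm ip v /\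
  `|cIm (ip u v)| <= hnorm ip u * hnorm ip v.
Proof.
have unit1 (c : R[i]) : cRe c ^+ 2 + cIm c ^+ 2 = 1 -> cnorm c = 1.
  by case: c => x y /= ->; rewrite sqrtr1.
have h1 := @unit_Re_ip_le 1 u v (unit1 _ _).
have h2 := @unit_Re_ip_le (-1) u v (unit1 _ _).
have h3 := @unit_Re_ip_le (- 'i%C) u v (unit1 _ _).
have h4 := @unit_Re_ip_le ('i%C) u v (unit1 _ _).
rewrite !ReImE in h1 h2 h3 h4.
by rewrite !ler_norml; split; apply/andP; split; lra.
Qed.

Lemma hnormD_le u v : hnorm ip (u + v) <= hnorm ip u + hnorm ip v.
Proof.
rewrite -(@ler_pXn2r _ 2) ?nnegrE ?addr_ge0 ?hnorm_ge0 //.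
rewrite hnorm_sqr hnorm2D sqrrD -!hnorm_sqr; have := Re_ip_le u v; lra.
Qed.

Lemma hnorm_le_eps_eq0 u : (forall e, 0 < e -> hnorm ip u <= e) -> u = 0.
Proof.
move=> small; apply: hnorm_eq0; apply/eqP; rewrite eq_le hnorm_ge0 andbT.
by apply/ler_addgt0Pr => e e0; rewrite add0r small.
Qed.

(* polarization: [Im <L u, u> = 0] at [u = x + y] and at [u = x + 'i y] *)
Lemma ip_selfadjoint (L : V -> V) :
  {morph L : x y / x + y} -> (forall u, L ('i%C *: u) = 'i%C *: L u) ->
  (forall u, cIm (ip (L u) u) = 0) -> forall x y, ip (L x) y = ip x (L y).
Proof.
move=> LD Li Lreal x y.
have := Lreal (x + y); rewrite LD !ipD !ipDr !ImD !Lreal => h1.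
have := Lreal (x + 'i%C *: y); rewrite LD Li !ipD !ipDr !ipZ !ipZr.
rewrite !ImD !ImM !ReImE (Lreal x) (Lreal y) => h2.
have := Re_ipC (L y) y; have := Im_ipC (L y) y; rewrite (Lreal y) => ? ?.
by rewrite [ip x _]ipC; apply: complex_ReIm_eq; rewrite !ReImE; lra.
Qed.

Section HasSum.
Variable I : choiceType.
Implicit Types (F G : I -> V) (J A : set I).

Lemma has_sum_unique F J v w : has_sum ip F J v -> has_sum ip F J w -> v = w.
Proof.
move=> Fv Fw; apply/eqP; rewrite -subr_eq0; apply/eqP/hnorm_le_eps_eq0 => e e0.
have e2 : 0 < e / 2 by rewrite divr_gt0.
have [A0 [fA0 A0J nearA0]] := Fv _ e2; have [A1 [fA1 A1J nearA1]] := Fw _ e2.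
have fA : finite_set (A0 `|` A1) by rewrite finite_setU.
have AJ : A0 `|` A1 `<=` J by move=> i [/A0J|/A1J].
have := nearA0 _ fA (@subsetUl _ _ _) AJ; have := nearA1 _ fA (@subsetUr _ _ _) AJ.
set s := \sum_(i \in _) F i; rewrite (hnormBC w) => ? ?.
have := hnormD_le (v - s) (s - w); rewrite addrA subrK; lra.
Qed.

Lemma has_sumZD F G J v w a : has_sum ip F J v -> has_sum ip G J w ->
  has_sum ip (fun i => a *: F i + G i) J (a *: v + w).
Proof.
move=> Fv Gw e e0; have a0 := normc_ge0 a.
have a1 : 0 < cnorm a + 1 by rewrite ltr_wpDl.
set d := e / (cnorm a + 1); have d0 : 0 < d by rewrite divr_gt0.
have ed : e = (cnorm a + 1) * d by rewrite mulrC divfK // gt_eqF.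
have [A0 [fA0 A0J nearA0]] := Fv _ d0; have [A1 [fA1 A1J nearA1]] := Gw _ d0.
exists (A0 `|` A1); split; [by rewrite finite_setU|by move=> i [/A0J|/A1J]|].
move=> A fA sA AJ.
have := nearA0 _ fA (subset_trans (@subsetUl _ _ _) sA) AJ.
have := nearA1 _ fA (subset_trans (@subsetUr _ _ _) sA) AJ.
rewrite fsbig_split // -scaler_fsumr //.
set sF := \sum_(i \in A) F i; set sG := \sum_(i \in A) G i => hG hF.
have -> : a *: v + w - (a *: sF + sG) = a *: (v - sF) + (w - sG).
  by rewrite scalerBr opprD addrACA.
apply: le_lt_trans (hnormD_le _ _) _; rewrite hnormZ ed; nra.
Qed.

Lemma has_sum_setUCr F J v w : has_sum ip F J v -> has_sum ip F (~` J) w ->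
  has_sum ip F setT (v + w).
Proof.
move=> Fv Fw e e0; have e2 : 0 < e / 2 by rewrite divr_gt0.
have [A0 [fA0 A0J nearA0]] := Fv _ e2; have [A1 [fA1 A1J nearA1]] := Fw _ e2.
exists (A0 `|` A1); split; rewrite ?finite_setU // => A fA sA _.
have := nearA0 (A `&` J) (finite_setIl _ fA)
  (fun i h => conj (sA i (or_introl h)) (A0J i h)) (@subIsetr _ _ _).
have := nearA1 (A `&` ~` J) (finite_setIl _ fA)
  (fun i h => conj (sA i (or_intror h)) (A1J i h)) (@subIsetr _ _ _).
rewrite (fsbigID J A) //; set sJ := \sum_(i \in _ `&` J) _; set sC := \sum_(i \in _) _.
have -> : v + w - (sJ + sC) = (v - sJ) + (w - sC) by rewrite opprD addrACA.
by move=> ? ?; apply: le_lt_trans (hnormD_le _ _) _; lra.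
Qed.

Lemma has_sum_hnorm_le F J v M : has_sum ip F J v ->
  (forall A, finite_set A -> A `<=` J -> hnorm ip (\sum_(i \in A) F i) <= M) ->
  hnorm ip v <= M.
Proof.
move=> Fv bounded; apply/ler_addgt0Pr => e e0; rewrite addrC.
have [A0 [fA0 A0J nearA0]] := Fv _ e0.
have := nearA0 _ fA0 (@subset_refl _ _) A0J; have := bounded _ fA0 A0J.
have := hnormD_le (v - \sum_(i \in A0) F i) (\sum_(i \in A0) F i).
by rewrite subrK => ? ? ?; lra.
Qed.

Lemma has_sum_ipl F J v y e : has_sum ip F J v -> 0 < e ->
  exists A0, [/\ finite_set A0, A0 `<=` J &
    forall A, finite_set A -> A0 `<=` A -> A `<=` J ->
      `|cRe (ip v y - \sum_(i \in A) ip (F i) y)| <= e /\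
      `|cIm (ip v y - \sum_(i \in A) ip (F i) y)| <= e].
Proof.
move=> Fv e0; have y0 := hnorm_ge0 y.
have e' : 0 < e / (hnorm ip y + 1) by rewrite divr_gt0 // ltr_wpDl.
have [A0 [fA0 A0J nearA0]] := Fv _ e'.
exists A0; split => // A fA sA AJ.
have := nearA0 A fA sA AJ; rewrite ltr_pdivlMr ?ltr_wpDl // => near.
have := hnorm_ge0 (v - \sum_(i \in A) F i).
have [] := ReIm_ip_le (v - \sum_(i \in A) F i) y.
by rewrite ipB ip_fsum // => ? ? ?; split; nra.
Qed.

End HasSum.

Section Completeness.
Hypothesis complete : forall s : nat -> V,
  (forall e : R, 0 < e -> exists N : nat, forall m n : nat,
     (N <= m)%N -> (N <= n)%N -> hnorm ip (s m - s n) < e) ->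
  exists l : V, forall e : R, 0 < e -> exists N : nat, forall n : nat,
     (N <= n)%N -> hnorm ip (s n - l) < e.

Lemma cauchy_limit (s : nat -> V) (b : nat -> R) :
  (forall n m, (n <= m)%N -> hnorm ip (s m - s n) <= b n) ->
  (forall e, 0 < e -> exists N, forall n, (N <= n)%N -> b n < e) ->
  exists l, forall n, hnorm ip (s n - l) <= b n.
Proof.
move=> sb b_small; have [l sl] : exists l, forall e, 0 < e ->
    exists N, forall n, (N <= n)%N -> hnorm ip (s n - l) < e.
  apply: complete => e /b_small[N bN]; exists N => m n Nm Nn.
  have [nm|mn] := leqP n m; first exact: le_lt_trans (sb _ _ nm) (bN _ Nn).
  by rewrite hnormBC; apply: le_lt_trans (sb _ _ (ltnW mn)) (bN _ Nm).
exists l => n; apply/ler_addgt0Pr => e /sl[N sN].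
have /sN : (N <= maxn n N)%N by rewrite leq_maxr.
have := sb _ _ (leq_maxl n N); rewrite hnormBC.
have := hnormD_le (s n - s (maxn n N)) (s (maxn n N) - l).
by rewrite addrA subrK => ? ? ?; lra.
Qed.

Lemma cauchy_has_sum (I : choiceType) (F : I -> V) (J : set I) :
  (forall e, 0 < e -> exists A0, [/\ finite_set A0, A0 `<=` J &
     forall A' A, finite_set A -> A0 `<=` A' -> A' `<=` A -> A `<=` J ->
       hnorm ip (\sum_(i \in A) F i - \sum_(i \in A') F i) < e]) ->
  exists v, has_sum ip F J v.
Proof.
move=> cauchy; pose tol n : R := n.+1%:R^-1.
have tol_gt0 n : 0 < tol n by rewrite invr_gt0.
have [G /all_and3[fG GJ Gtail]] := choice (fun n => cauchy _ (tol_gt0 n)).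
have [C [CJ GC Cmono]] := nondecreasing_finite_cover (fun n => conj (fG n) (GJ n)).
pose s n := \sum_(i \in C n) F i.
have [l sl] : exists l, forall n, hnorm ip (s n - l) <= tol n.
  apply: cauchy_limit => [n m nm|e e0].
    by case: (CJ m) => fCm CmJ; apply/ltW/(Gtail n) => //; exact: Cmono.
  by have [N _ tolN] := near_infty_natSinv_lt (PosNum e0); exists N.
exists l => e e0; have e2 : 0 < e / 2 by rewrite divr_gt0.
have [N _ /(_ N (leqnn N)) tolN] := near_infty_natSinv_lt (PosNum e2).
have {}tolN : tol N < e / 2 := tolN.
case: (CJ N) => fCN CNJ; exists (C N); split => // A fA CNA AJ.
have := Gtail N (C N) A fA (GC N) CNA AJ; rewrite hnormBC -/(s N) => near.
have := hnormD_le (l - s N) (s N - \sum_(i \in A) F i); rewrite addrA subrK.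
by have := sl N; rewrite hnormBC; lra.
Qed.

Lemma geometric_increments_bound (s : nat -> V) (c q : R) :
  0 <= q -> q < 1 -> (forall n, hnorm ip (s n.+1 - s n) <= c * q ^+ n) ->
  forall n m, (n <= m)%N -> hnorm ip (s m - s n) <= c / (1 - q) * q ^+ n.
Proof.
move=> q0 q1 ds n m /subnK <-; rewrite addnC.
have c0 : 0 <= c by have := ds 0%N; rewrite expr0 mulr1; apply: le_trans (hnorm_ge0 _).
suff tele k : hnorm ip (s (n + k)%N - s n) <= c / (1 - q) * (q ^+ n - q ^+ (n + k)).
  apply: le_trans (tele _) _; apply: ler_wpM2l; first by rewrite divr_ge0 // subr_ge0 ltW.
  by rewrite lerBlDr lerDl exprn_ge0.
elim: k => [|k IH]; first by rewrite addn0 !subrr hnorm0 mulr0.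
rewrite addnS -(subrK (s (n + k)%N) (s (n + k).+1)) -addrA.
apply: le_trans (hnormD_le _ _) _; have := ds (n + k)%N.
have -> : c / (1 - q) * (q ^+ n - q ^+ (n + k).+1) =
    c * q ^+ (n + k) + c / (1 - q) * (q ^+ n - q ^+ (n + k)).
  by rewrite exprS; field; rewrite subr_eq0 gt_eqF.
lra.
Qed.

Lemma near_identity_surjective (L : V -> V) (q : R) :
  {morph L : x y / x + y} -> 0 <= q -> q < 1 ->
  (forall x, hnorm ip (x - L x) <= q * hnorm ip x) -> forall y, exists x, L x = y.
Proof.
move=> LD q0 q1 Lnear y.
have L0 : L 0 = 0 by apply: (addrI (L 0)); rewrite -LD !addr0.
have LB x z : L (x - z) = L x - L z.
  by rewrite LD; congr (_ + _); apply: (addrI (L z)); rewrite -LD !subrr.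
have L_le z : hnorm ip (L z) <= (1 + q) * hnorm ip z.
  have := hnormD_le z (L z - z); rewrite addrC subrK hnormBC.
  by have := Lnear z; lra.
pose fix x n := if n is m.+1 then x m + (y - L (x m)) else 0.
have res_le n : hnorm ip (y - L (x n)) <= hnorm ip y * q ^+ n.
  elim: n => [|n IH] /=; first by rewrite -(subrr 0) LB subrr subr0 mulr1.
  rewrite LD opprD addrA; apply: le_trans (Lnear _) _.
  by rewrite exprS mulrCA ler_wpM2l.
have incr n : hnorm ip (x n.+1 - x n) <= hnorm ip y * q ^+ n.
  by rewrite /= addrC addKr res_le.
have [l xl] := cauchy_limit (geometric_increments_bound q0 q1 incr)
  (fun e e0 => geometric_eventually_lt _ q0 q1 e0).
exists l; apply/eqP; rewrite -subr_eq0; apply/eqP/hnorm_le_eps_eq0 => e e0.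
have [n /(_ n (leqnn n)) small] := geometric_eventually_lt
  (hnorm ip y + (1 + q) * (hnorm ip y / (1 - q))) q0 q1 e0.
have -> : L l - y = - (L (x n - l) + (y - L (x n))).
  by rewrite LB opprD !opprB addrA subrK.
rewrite hnormN; have := hnormD_le (L (x n - l)) (y - L (x n)).
have : (1 + q) * hnorm ip (x n - l) <= (1 + q) * (hnorm ip y / (1 - q) * q ^+ n).
  by rewrite ler_wpM2l ?addr_ge0.
by have := L_le (x n - l); have := res_le n; lra.
Qed.

Section Frame.
Variables (I : choiceType) (f : I -> V) (lb ub : R).
Hypothesis lb_gt0 : 0 < lb.
Hypothesis lb_le_ub : lb <= ub.
Hypothesis frame_bounds : forall g,
  ((lb * hnorm2 g)%:E <= sq_coef_sum ip f setT g)%E /\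
  (sq_coef_sum ip f setT g <= (ub * hnorm2 g)%:E)%E.

Local Notation coef x i := (ip x (f i)).
Local Notation term x := (fun i => ip x (f i) *: f i).
Local Notation S_ := (frame_op_on ip f).
Local Notation S := (frame_op_on ip f setT).

Lemma ub_gt0 : 0 < ub. Proof. exact: lt_le_trans lb_le_ub. Qed.

Lemma fsum_le_coef_sum J x (A : set I) : finite_set A -> A `<=` J ->
  ((\sum_(i \in A) cnorm (coef x i) ^+ 2)%:E <= sq_coef_sum ip f J x)%E.
Proof. by move=> fA AJ; apply: esum_ge; exists A => //; rewrite fsumEFin. Qed.

Lemma coef_sum_fin_num J x : sq_coef_sum ip f J x \is a fin_num.
Proof.
rewrite ge0_fin_numE; last by apply: esum_ge0 => i _; rewrite lee_fin sqr_ge0.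
apply: le_lt_trans (le_trans _ (proj2 (frame_bounds x))) (ltry _).
rewrite /sq_coef_sum esum_mkcond; apply: le_esum => i _.
by case: ifP; rewrite ?lee_fin ?sqr_ge0.
Qed.

Lemma fsum_coef_le x (A : set I) : finite_set A ->
  \sum_(i \in A) cnorm (coef x i) ^+ 2 <= ub * hnorm2 x.
Proof.
by move=> fA; rewrite -lee_fin; apply: le_trans (proj2 (frame_bounds x)); exact: fsum_le_coef_sum.
Qed.

Lemma bessel_fsum (A : set I) (a : I -> R[i]) : finite_set A ->
  hnorm2 (\sum_(i \in A) a i *: f i) <= ub * \sum_(i \in A) cnorm (a i) ^+ 2.
Proof.
move=> fA; set y := \sum_(i \in A) a i *: f i; have ub0 := ub_gt0.
have yE : hnorm2 y = \sum_(i \in A) cRe (a i * conjc (coef y i)).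
  rewrite /hnorm2 {1}/y ip_fsum // Re_fsum //.
  by apply: eq_fsbigr => i _; rewrite ipZ -ipC.
have amgm : 2 * ub * hnorm2 y <=
    ub ^+ 2 * \sum_(i \in A) cnorm (a i) ^+ 2 + \sum_(i \in A) cnorm (coef y i) ^+ 2.
  rewrite yE mulr_fsumr mulr_fsumr -fsbig_split //.
  by apply: ler_fsum => // i _; exact: Re_mulcJ_le.
have := fsum_coef_le y fA.
have : 0 <= \sum_(i \in A) cnorm (a i) ^+ 2 by apply: fsumr_ge0 => i _; exact: sqr_ge0.
nra.
Qed.

Lemma coef_sum_approx J x d : 0 < d -> exists A0, [/\ finite_set A0, A0 `<=` J &
  forall A, finite_set A -> A `<=` J ->
    \sum_(i \in A) cnorm (coef x i) ^+ 2 <= \sum_(i \in A0) cnorm (coef x i) ^+ 2 + d].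
Proof.
move=> d0; have sE := fineK (coef_sum_fin_num J x).
have : ((fine (sq_coef_sum ip f J x) - d)%:E < sq_coef_sum ip f J x)%E.
  by rewrite -[in ltRHS]sE lte_fin ltrBlDr ltrDl.
move=> /ereal_sup_gt[_ [A0 [fA0 A0J] <-]]; rewrite fsumEFin // lte_fin => A0d.
exists A0; split => // A fA AJ.
have := fsum_le_coef_sum x fA AJ; rewrite -sE lee_fin; lra.
Qed.

Lemma frame_partial_sums_cauchy J x d : 0 < d -> exists A0, [/\ finite_set A0, A0 `<=` J &
  forall A' A, finite_set A -> A0 `<=` A' -> A' `<=` A -> A `<=` J ->
    hnorm2 (\sum_(i \in A) term x i - \sum_(i \in A') term x i) <= ub * d].
Proof.
move=> d0; have [A0 [fA0 A0J A0d]] := coef_sum_approx J x d0.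
exists A0; split => // A' A fA A0A' A'A AJ.
have fA' : finite_set A' := sub_finite_set A'A fA.
rewrite fsumr_setD //; apply: le_trans (bessel_fsum _ (finite_setD _ fA)) _.
rewrite ler_pM2l ?ub_gt0 // -fsumr_setD //.
have := ler_fsum_subset (F := fun i => cnorm (coef x i) ^+ 2) fA' A0A' (fun i _ => sqr_ge0 _).
by have := A0d A fA AJ; lra.
Qed.

Lemma frame_op_on_has_sum J x : has_sum ip (term x) J (S_ J x).
Proof.
apply: (xgetPex 0); apply: cauchy_has_sum => e e0; have ub0 := ub_gt0.
have d0 : 0 < e ^+ 2 / (ub + ub) by rewrite divr_gt0 ?exprn_gt0 ?addr_gt0.
have [A0 [fA0 A0J tail]] := frame_partial_sums_cauchy J x d0.
exists A0; split => // A' A fA A0A' A'A AJ; apply: hnorm_lt => //.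
apply: le_lt_trans (tail _ _ fA A0A' A'A AJ) _.
have -> : ub * (e ^+ 2 / (ub + ub)) = e ^+ 2 / 2 by field; rewrite gt_eqF ?addr_gt0.
by have := exprn_gt0 2 e0; lra.
Qed.

Lemma frame_op_onDZ J a x y : S_ J (a *: x + y) = a *: S_ J x + S_ J y.
Proof.
apply: has_sum_unique (frame_op_on_has_sum J _) _.
have -> : term (a *: x + y) = fun i => a *: term x i + term y i.
  by apply: funext => i; rewrite ip_linear scalerDl scalerA.
exact: has_sumZD (frame_op_on_has_sum _ _) (frame_op_on_has_sum _ _).
Qed.

Lemma frame_op_on0 J : S_ J 0 = 0.
Proof.
have h := frame_op_onDZ J 1 0 0; rewrite !scale1r addr0 in h.
by apply: (addrI (S_ J 0)); rewrite addr0 -h.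
Qed.

Lemma frame_op_onD J : {morph S_ J : x y / x + y}.
Proof. by move=> x y; have := frame_op_onDZ J 1 x y; rewrite !scale1r. Qed.

Lemma frame_op_onZ J a x : S_ J (a *: x) = a *: S_ J x.
Proof. by rewrite -[a *: x]addr0 frame_op_onDZ frame_op_on0 addr0. Qed.

Lemma frame_op_setUCr J x : S x = S_ J x + S_ (~` J) x.
Proof.
apply: has_sum_unique (frame_op_on_has_sum _ _) _.
exact: has_sum_setUCr (frame_op_on_has_sum _ _) (frame_op_on_has_sum _ _).
Qed.

Lemma frame_op_on_ip_approx J x e : 0 < e -> exists A0, [/\ finite_set A0, A0 `<=` J &
  forall A, finite_set A -> A0 `<=` A -> A `<=` J ->
    `|cRe (ip (S_ J x) x) - \sum_(i \in A) cnorm (coef x i) ^+ 2| <= e /\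
    `|cIm (ip (S_ J x) x)| <= e].
Proof.
move=> e0; have [A0 [fA0 A0J near]] := has_sum_ipl x (frame_op_on_has_sum J x) e0.
exists A0; split => // A fA A0A AJ; have [] := near A fA A0A AJ.
rewrite ReB ImB Re_fsum // Im_fsum //.
have sumRe : \sum_(i \in A) cRe (ip (coef x i *: f i) x) =
    \sum_(i \in A) cnorm (coef x i) ^+ 2.
  by apply: eq_fsbigr => i _; rewrite ipZ (ipC x) (proj1 (mulcJ_ReIm _)).
have sumIm : \sum_(i \in A) cIm (ip (coef x i *: f i) x) = 0.
  by apply: fsbig1 => i _; rewrite ipZ (ipC x) (proj2 (mulcJ_ReIm _)).
by rewrite sumRe sumIm subr0.
Qed.

Lemma coef_sum_frame_op_on J x : sq_coef_sum ip f J x = (cRe (ip (S_ J x) x))%:E.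
Proof.
apply: esum_net_cvg => [i _|e e0]; first exact: sqr_ge0.
have [A0 [fA0 A0J near]] := frame_op_on_ip_approx J x e0.
by exists A0; split => // A fA A0A AJ; case: (near A fA A0A AJ).
Qed.

Lemma Im_frame_op_on_ip J x : cIm (ip (S_ J x) x) = 0.
Proof.
apply/normr0_eq0/le_anti; rewrite normr_ge0 andbT; apply/ler_addgt0Pr => e e0.
have [A0 [fA0 A0J near]] := frame_op_on_ip_approx J x e0.
by rewrite add0r; case: (near A0 fA0 (@subset_refl _ _) A0J).
Qed.

Lemma frame_op_bounds x :
  lb * hnorm2 x <= cRe (ip (S x) x) /\ cRe (ip (S x) x) <= ub * hnorm2 x.
Proof. by have [] := frame_bounds x; rewrite coef_sum_frame_op_on !lee_fin. Qed.

Lemma frame_op_selfadjoint x y : ip (S x) y = ip x (S y).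
Proof.
apply: ip_selfadjoint; [exact: frame_op_onD|exact: frame_op_onZ|].
exact: Im_frame_op_on_ip.
Qed.

Lemma hnorm2_frame_op_le x : hnorm2 (S x) <= ub * cRe (ip (S x) x).
Proof.
have ubQ : 0 <= ub * cRe (ip (S x) x).
  by rewrite (mulr_ge0 (ltW ub_gt0)) // -lee_fin -coef_sum_frame_op_on esum_ge0 // => i _; rewrite lee_fin sqr_ge0.
rewrite -hnorm_sqr -(sqr_sqrtr ubQ) ler_pXn2r ?nnegrE ?hnorm_ge0 ?sqrtr_ge0 //.
apply: has_sum_hnorm_le (frame_op_on_has_sum _ _) _ => A fA _.
rewrite /hnorm -/(hnorm2 _) ler_sqrt //; apply: le_trans (bessel_fsum _ fA) _.
rewrite ler_pM2l ?ub_gt0 // -lee_fin -coef_sum_frame_op_on.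
exact: fsum_le_coef_sum.
Qed.

Lemma frame_op_inj x y : S x = S y -> x = y.
Proof.
move=> Sxy; apply/eqP; rewrite -subr_eq0; apply/eqP/hnorm2_eq0.
have S0 : S (x - y) = 0.
  by rewrite frame_op_onD -scaleN1r frame_op_onZ scaleN1r Sxy subrr.
have [+ _] := frame_op_bounds (x - y); rewrite S0 ip0 Re0 => lb_le0.
by apply/le_anti; rewrite hnorm2_ge0 andbT -(ler_pM2l lb_gt0) mulr0.
Qed.

Lemma frame_op_near_identity x :
  hnorm ip (x - (ub^-1)%:C%C *: S x) <= Num.sqrt (1 - lb / ub) * hnorm ip x.
Proof.
have ub0 := ub_gt0; have ubV0 : 0 < ub^-1 by rewrite invr_gt0.
have lb_ub : 0 <= 1 - lb / ub by rewrite subr_ge0 ler_pdivrMr // mul1r.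
rewrite /hnorm -!/(hnorm2 _) -sqrtrM // ler_sqrt ?mulr_ge0 ?hnorm2_ge0 //.
rewrite hnorm2B hnorm2Z ipZr normc_sqr !ReImE oppr0 expr0n !mul0r subr0 addr0.
have [lbQ Qub] := frame_op_bounds x; rewrite Re_ipC in lbQ Qub *.
have := hnorm2_frame_op_le x; rewrite Re_ipC => SQ.
have : ub^-1 ^+ 2 * hnorm2 (S x) <= ub^-1 * cRe (ip x (S x)).
  rewrite expr2 -mulrA ler_pM2l //; rewrite ler_pdivrMl //.
have : ub^-1 * (lb * hnorm2 x) <= ub^-1 * cRe (ip x (S x)) by rewrite ler_pM2l.
lra.
Qed.

Lemma frame_op_surj y : exists x, S x = y.
Proof.
have ub0 := ub_gt0; set q := Num.sqrt (1 - lb / ub).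
have q1 : q < 1 by rewrite -sqrtr1 ltr_sqrt // ltrBlDr ltrDl divr_gt0.
have LD : {morph (fun x => (ub^-1)%:C%C *: S x) : u v / u + v}.
  by move=> u v; rewrite frame_op_onD scalerDr.
have [x Lx] := near_identity_surjective LD (sqrtr_ge0 _) q1 frame_op_near_identity y.
by exists ((ub^-1)%:C%C *: x); rewrite frame_op_onZ.
Qed.

Local Notation T := (op_inv (frame_op ip f)).

Lemma op_inv_frame_opK y : S (T y) = y.
Proof. exact: (xgetPex 0 (frame_op_surj y)). Qed.

Lemma frame_op_invK x : T (S x) = x.
Proof. by apply: frame_op_inj; rewrite op_inv_frame_opK. Qed.

Lemma op_inv_frame_opD u v : T (u + v) = T u + T v.
Proof. by apply: frame_op_inj; rewrite frame_op_onD !op_inv_frame_opK. Qed.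

Lemma op_inv_frame_op_selfadjoint u v : ip u (T v) = ip (T u) v.
Proof. by rewrite -{1}(op_inv_frame_opK u) frame_op_selfadjoint op_inv_frame_opK. Qed.

Lemma coef_sum_canonical_dual h :
  sq_coef_sum ip (canonical_dual ip f) setT h = (cRe (ip h (T h)))%:E.
Proof.
have -> : sq_coef_sum ip (canonical_dual ip f) setT h = sq_coef_sum ip f setT (T h).
  by apply: eq_esum => i _; rewrite /canonical_dual op_inv_frame_op_selfadjoint.
by rewrite coef_sum_frame_op_on op_inv_frame_opK Re_ipC.
Qed.

Lemma frame_identity J g :
  (sq_coef_sum ip f J g - sq_coef_sum ip (canonical_dual ip f) setT (S_ J g) =
   sq_coef_sum ip f (~` J) g - sq_coef_sum ip (canonical_dual ip f) setT (S_ (~` J) g))%E.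
Proof.
rewrite !coef_sum_canonical_dual !coef_sum_frame_op_on -!EFinB; congr (_%:E).
set a := S_ J g; set b := S_ (~` J) g.
have <- : T a + T b = g by rewrite -op_inv_frame_opD -frame_op_setUCr frame_op_invK.
rewrite !ipDr !ReD (op_inv_frame_op_selfadjoint a b) (Re_ipC b).
lra.
Qed.

End Frame.

End Completeness.

End InnerProduct.

Theorem theorem3p1 (R : realType) (V : lmodType R[i]) (ip : V -> V -> R[i])
  (I : choiceType) (f : I -> V) :
  is_hilbert ip -> is_frame ip f ->
  forall (J : set I) (g : V),
    (sq_coef_sum ip f J g
       - sq_coef_sum ip (canonical_dual ip f) setT (frame_op_on ip f J g)
     = sq_coef_sum ip f (~` J) g
       - sq_coef_sum ip (canonical_dual ip f) setT (frame_op_on ip f (~` J) g))%E.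
Proof.
move=> [ip_linear ipC ipxx_ge0 ipxx_eq0 complete] [lb [ub [lb_gt0 lb_le_ub bounds]]].
apply: (frame_identity ip_linear ipC ipxx_ge0 ipxx_eq0 complete lb_gt0 lb_le_ub).
by move=> g; rewrite -(hnorm_sqr ipxx_ge0); exact: bounds.
Qed.
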